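(* Let $q$ be a prime power and $n=q^4-1$. There is no symmetric cyclotomic coset of cardinality $2$; that is, there is no $x\in\{0,\ldots,n-1\}$ with $\#I_x=2$ and $I_{n-qx}=I_x$.
   Context: Identify $\mathbb{Z}_n$ with $\{0,\ldots,n-1\}$, all arithmetic modulo $n$. The cyclotomic coset of $x$ with respect to $q^2$ is $I_x=\{x,\,q^2x\bmod n\}$. The (Hermitian) reciprocal coset of $I_x$ is $I_{n-qx}$; $I_x$ is symmetric if $I_{n-qx}=I_x$. *)

From mathcomp Require Import all_boot.

Definition prime_power (q : nat) : Prop :=
  exists p k : nat, prime p /\ 0 < k /\ q = p ^ k.

(* The q^2-cyclotomic coset of x modulo n, as a duplicate-free list:
   I_x = {x, q^2 x mod n} (elements taken in Z_n = {0,...,n-1}). *)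
Definition cyc_coset (n q x : nat) : seq nat :=
  undup [:: x %% n; (q ^ 2 * x) %% n].

Definition recip_index (n q x : nat) : nat := (n - (q * x) %% n) %% n.

From mathcomp Require Import all_boot.

(* Modulo n = q^4 - 1 we have q^4 = 1, so q is a unit.  The reciprocal
   n - q x of x lies in I_x = {x, q^2 x} exactly when n divides x + q x or
   q^2 x + q x = q (x + q x); as q is a unit, n | x + q x in both cases.  But
   then q^2 x + q x = q (x + q x) = 0 = x + q x mod n, so q^2 x = x and I_x
   is a singleton. *)

Lemma unit_mul_mod0 {n q y : nat} (k : nat) : q ^ k.+1 = 1 %[mod n] ->
  q * y = 0 %[mod n] -> y = 0 %[mod n].
Proof.
move=> hq hy; rewrite -[y]mul1n -modnMml -hq modnMml expnSr -mulnA.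
by rewrite -modnMmr hy mod0n muln0 mod0n.
Qed.

Lemma size_cyc_coset (n q x : nat) :
  size (cyc_coset n q x) = (x %% n != (q ^ 2 * x) %% n).+1.
Proof. by rewrite /cyc_coset /= inE; case: eqP. Qed.

Lemma mem_cyc_coset (n q x y : nat) :
  (y \in cyc_coset n q x) = (y == x %% n) || (y == (q ^ 2 * x) %% n).
Proof. by rewrite mem_undup !inE. Qed.

Lemma recip_indexE {n : nat} (q x : nat) : 0 < n ->
  recip_index n q x + q * x = 0 %[mod n].
Proof.
move=> n_gt0; rewrite /recip_index modnDml -modnDmr.
by rewrite subnK ?modnn ?mod0n // ltnW ?ltn_pmod.
Qed.

Lemma cyc_coset_collapse {n q x : nat} :
  x + q * x = 0 %[mod n] -> x = q ^ 2 * x %[mod n].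
Proof.
move=> hx; apply/eqP; rewrite -(eqn_modDr (q * x)) hx.
have -> : q ^ 2 * x + q * x = q * (x + q * x).
  by rewrite mulnDr mulnA mulnn addnC.
by rewrite -modnMmr hx mod0n muln0 mod0n.
Qed.

Lemma recip_index_in_cyc_coset {n q x : nat} : 0 < n -> q ^ 4 = 1 %[mod n] ->
  recip_index n q x \in cyc_coset n q x -> x + q * x = 0 %[mod n].
Proof.
move=> n_gt0 hq /[!mem_cyc_coset] /orP[] /eqP ey;
  have := recip_indexE q x n_gt0; rewrite ey modnDml // => hx.
by apply: (unit_mul_mod0 3 hq); rewrite mulnDr mulnA mulnn addnC.
Qed.

Theorem mainTheorem9 (q : nat) (hq : prime_power q) :
  ~ (exists x : nat,
        x < q ^ 4 - 1 /\
        size (cyc_coset (q ^ 4 - 1) q x) = 2 /\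
        cyc_coset (q ^ 4 - 1) q (recip_index (q ^ 4 - 1) q x)
          =i cyc_coset (q ^ 4 - 1) q x).
Proof.
move=> [x [xn [hsize hsym]]].
set n := q ^ 4 - 1 in xn hsize hsym.
have n_gt0 : 0 < n by apply: leq_ltn_trans xn.
have q4_mod : q ^ 4 = 1 %[mod n].
  rewrite -[q ^ 4](@subnK 1) -/n ?modnDl //.
  by apply: ltnW; rewrite -subn_gt0.
have self_in : recip_index n q x \in cyc_coset n q x.
  by rewrite -hsym mem_cyc_coset (modn_small (ltn_pmod _ n_gt0)) eqxx.
have collapse : x = q ^ 2 * x %[mod n].
  exact: cyc_coset_collapse (recip_index_in_cyc_coset n_gt0 q4_mod self_in).
by move: hsize; rewrite size_cyc_coset collapse eqxx.
Qed.
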